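(* Let $G$ be a graph on $n$ vertices that is not isomorphic to any of $K_n$, $\overline{K_n}$, $K_{a,n-a}$, or $\overline{K_{a,n-a}}$ for any integer $1\le a\le\lfloor n/2\rfloor$. Then \[ \operatorname{rank}(A_G+I)\cdot\operatorname{rank}(A_{\overline G}+I)\ \ge\ 3(n-1). \]
   Context: All graphs are simple (undirected, no loops or multiple edges). $A_G$ denotes the $n\times n$ adjacency matrix of $G$, $\overline{G}$ the complement of $G$, $I=I_n$ the $n\times n$ identity matrix, and $\operatorname{rank}$ is the rank over $\mathbb{R}$. $K_n$ is the complete graph on $n$ vertices, $\overline{K_n}$ the edgeless graph on $n$ vertices, and $K_{a,b}$ the complete bipartite graph with part sizes $a$ and $b$. *)

From mathcomp Require Import all_boot all_order all_algebra all_fingroup.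
Set Implicit Arguments. Unset Strict Implicit. Unset Printing Implicit Defensive.
Import GRing.Theory Num.Theory.
Local Open Scope ring_scope.

Definition simple_graph (n : nat) (e : rel 'I_n) : Prop :=
  symmetric e /\ irreflexive e.

Definition compl_graph (n : nat) (e : rel 'I_n) : rel 'I_n :=
  fun x y => (x != y) && ~~ e x y.

Definition adj_mx (R : nzRingType) (n : nat) (e : rel 'I_n) : 'M[R]_n :=
  \matrix_(i, j) (e i j)%:R.

Definition graph_iso (n : nat) (e1 e2 : rel 'I_n) : Prop :=
  exists s : 'S_n, forall x y, e1 x y = e2 (s x) (s y).

Definition complete_graph (n : nat) : rel 'I_n := fun x y => x != y.
Definition empty_graph (n : nat) : rel 'I_n := fun _ _ => false.

Definition complete_bipartite (n a : nat) : rel 'I_n :=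
  fun x y => (x < a)%N != (y < a)%N.

Arguments complete_graph n : clear implicits.
Arguments empty_graph n : clear implicits.
Arguments complete_bipartite n a : clear implicits.

From mathcomp Require Import all_boot all_order all_algebra all_fingroup.
From mathcomp Require Import ring lra zify.
Set Implicit Arguments. Unset Strict Implicit. Unset Printing Implicit Defensive.
Import Order.TTheory GRing.Theory Num.Theory.

(* Write X = A_G + I and Y = A_{G-bar} + I, so that W := X + Y = J + I is positive
   definite.  A graph other than K_n and the disjoint unions of two cliques contains an
   induced path on three vertices or three independent vertices, whose principal 3x3
   submatrix of A + I is invertible; hence r = rank X >= 3 and s = rank Y >= 3, and
   since r s >= 3 (r + s - 3) it suffices to show r + s >= n + 2.

   If r + s <= n + 1 then ker X + ker Y (a direct sum, as W is definite) is at most a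
   hyperplane, and a vector z that is W-orthogonal to it satisfies z X = lam z W.
   Writing v = a + b + al z with a X = 0 = b Y, the quadratic forms become
   Q_X(v) = Q_W(b) + al^2 lam Q_W(z) and Q_Y(v) = Q_W(a) + al^2 (1 - lam) Q_W(z):
   the pencil (X, W) has at most one generalized eigenvalue lam outside {0, 1}.  So X and
   Y are not both indefinite, Y is not negative definite on a plane, and Y is not
   indefinite while Q_W(u X W^-1) < Q_X(u) for some u.
   The first case occurs when G and its complement both contain an induced path on three
   vertices.  Otherwise one of them, say G, is a disjoint union of at least three cliques,
   one of which has an edge; the third case applies to the basis vector of an isolated
   vertex if there is one, and the second case to two disjoint edges and a third vertex
   otherwise. *)

Lemma exists_perm_prefix n (S : {set 'I_n}) :
  exists s : 'S_n, forall x, (s x < #|S|)%N = (x \in S).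
Proof.
pose L := enum S ++ enum (~: S).
have memL x : x \in L by rewrite mem_cat !mem_enum in_setC orbN.
have size_L : size L = n by rewrite size_cat -!cardE cardsC card_ord.
have index_lt x : (index x L < n)%N by rewrite -[X in (_ < X)%N]size_L index_mem memL.
have index_inj : injective (fun x => Ordinal (index_lt x)).
  by move=> x y [] eq_xy; rewrite -(nth_index x (memL x)) eq_xy nth_index.
exists (perm index_inj) => x; rewrite permE /= /L index_cat mem_enum.
case: ifP => [xS|_]; first by rewrite cardE index_mem mem_enum xS.
by rewrite cardE ltnNge leq_addr.
Qed.

Section Graphs.
Variables (n : nat) (e : rel 'I_n).

Definition induced_P3 : bool :=
  [exists u, exists v, exists w, [&& e u v, e v w, ~~ e u w & u != w]].

Definition indep3 : bool :=
  [exists u, exists v, exists w,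
     [&& u != v, v != w, u != w & [&& ~~ e u v, ~~ e v w & ~~ e u w]]].

Lemma induced_P3_freeP : ~~ induced_P3 ->
  forall u v w, e u v -> e v w -> u != w -> e u w.
Proof.
move=> /existsPn P3_free u v w euv evw nuw; apply/negPn/negP => neuw.
by move/(_ u)/existsPn/(_ v)/existsPn/(_ w): P3_free; rewrite euv evw neuw nuw.
Qed.

Lemma indep3_freeP : ~~ indep3 -> forall u v w, u != v -> v != w -> u != w ->
  ~~ e u v -> ~~ e v w -> e u w.
Proof.
move=> /existsPn I3_free u v w nuv nvw nuw neuv nevw; apply/negPn/negP => neuw.
by move/(_ u)/existsPn/(_ v)/existsPn/(_ w): I3_free; rewrite nuv nvw nuw neuv nevw neuw.
Qed.

Lemma induced_P3_free_nonedge : ~~ induced_P3 ->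
  forall u v w, e u v -> ~~ e u w -> u != w -> ~~ e v w.
Proof.
move=> P3_free u v w euv neuw nuw; apply: contra neuw => evw.
exact: induced_P3_freeP P3_free _ _ _ euv evw nuw.
Qed.

Lemma eq_graph_iso (F : rel 'I_n) : e =2 F -> graph_iso e F.
Proof. by move=> eF; exists 1%g => x y; rewrite !perm1. Qed.

Lemma graph_iso_compl (F : rel 'I_n) :
  graph_iso e F -> graph_iso (compl_graph e) (compl_graph F).
Proof. by case=> s eF; exists s => x y; rewrite /compl_graph eF (inj_eq perm_inj). Qed.

Lemma graph_iso_eql (e' F : rel 'I_n) : e =2 e' -> graph_iso e F -> graph_iso e' F.
Proof. by move=> ee' [s eF]; exists s => x y; rewrite -ee'. Qed.

Lemma graph_iso_eqr (F F' : rel 'I_n) : F =2 F' -> graph_iso e F -> graph_iso e F'.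
Proof. by move=> FF' [s eF]; exists s => x y; rewrite -FF'. Qed.

Lemma compl_graphK : irreflexive e -> compl_graph (compl_graph e) =2 e.
Proof.
move=> e_irr x y; rewrite /compl_graph.
by have [->|] := eqVneq x y; rewrite ?e_irr //= negbK.
Qed.

Lemma exists_edge : ~ graph_iso e (empty_graph n) -> exists x y, e x y.
Proof.
move=> not_E; have [/existsP [x /existsP [y exy]]|/existsPn no_edge] :=
  boolP [exists x, exists y, e x y]; first by exists x, y.
exfalso; apply: not_E; apply: eq_graph_iso => x y.
by apply/negbTE; move/existsPn: (no_edge x).
Qed.

Section SimpleGraph.
Hypothesis se : simple_graph e.
Let e_sym : symmetric e := proj1 se.
Let e_irr : irreflexive e := proj2 se.

Lemma compl_graph_simple : simple_graph (compl_graph e).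
Proof. by split=> [x y|x]; rewrite /compl_graph ?eqxx // eq_sym e_sym. Qed.

Section TwoCliques.
Variables p q : 'I_n.
Hypotheses (P3_free : ~~ induced_P3) (I3_free : ~~ indep3) (npq : p != q) (nepq : ~~ e p q).
Let inA x := (x == p) || e p x.

Let e_trans := induced_P3_freeP P3_free.

Let inA_edge x y : inA x -> inA y -> x != y -> e x y.
Proof.
rewrite /inA => /orP [/eqP ->|epx] /orP [/eqP ->|epy] nxy //; first by rewrite eqxx in nxy.
- by rewrite e_sym.
- by apply: (e_trans (v := p)); rewrite // e_sym.
Qed.

Let outA_nbr x : ~~ inA x -> (x == q) || e q x.
Proof.
rewrite /inA negb_or => /andP [nxp nepx]; have [//|nxq] := eqVneq x q.
by rewrite e_sym (indep3_freeP I3_free (v := p)) ?orbT // e_sym.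
Qed.

Let outA_edge x y : ~~ inA x -> ~~ inA y -> x != y -> e x y.
Proof.
move=> /outA_nbr /orP [/eqP ->|eqx] /outA_nbr /orP [/eqP ->|eqy] nxy //.
- by rewrite eqxx in nxy.
- by rewrite e_sym.
- by apply: (e_trans (v := q)); rewrite // e_sym.
Qed.

Let no_cross x y : inA x -> ~~ inA y -> ~~ e x y.
Proof.
rewrite /inA => Ax; apply: contra => exy; move: Ax => /orP [/eqP xp|epx].
  by rewrite -xp exy orbT.
have [->//|npy] := eqVneq p y.
by rewrite (e_trans epx exy npy) orbT.
Qed.

Lemma P3_indep3_free_two_cliques x y :
  e x y = (x != y) && (((x == p) || e p x) == ((y == p) || e p y)).
Proof.
have [->|nxy] := eqVneq x y; first by rewrite e_irr.
rewrite -!/(inA _); case Ax: (inA x); case Ay: (inA y) => /=.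
- exact: inA_edge.
- by apply/negbTE/no_cross; rewrite ?Ay.
- by rewrite e_sym; apply/negbTE/no_cross; rewrite ?Ax.
- by apply: outA_edge; rewrite ?Ax ?Ay.
Qed.

End TwoCliques.

Lemma iso_compl_bipartite (S : {set 'I_n}) : (0 < #|S| < n)%N ->
  (forall x y, e x y = (x != y) && ((x \in S) == (y \in S))) ->
  exists2 a, (1 <= a <= n./2)%N & graph_iso e (compl_graph (complete_bipartite n a)).
Proof.
have n_halves := odd_double_half n.
wlog S_small : S / (#|S| <= n./2)%N => [wlog_S S_bounds eS|S_bounds eS].
  have [small|big] := leqP #|S| n./2; first exact: wlog_S small S_bounds eS.
  have card_SC := cardsC S; rewrite card_ord in card_SC.
  apply: (wlog_S (~: S)); [lia | lia |] => x y.
  by rewrite eS !in_setC; case: (x \in S); case: (y \in S).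
have [s sS] := exists_perm_prefix S.
exists #|S|; first lia.
exists s => x y; rewrite eS /compl_graph /complete_bipartite !sS (inj_eq perm_inj).
by case: (x \in S); case: (y \in S).
Qed.

Lemma P3_indep3_free_classification : ~~ induced_P3 -> ~~ indep3 ->
  graph_iso e (complete_graph n) \/
  exists2 a, (1 <= a <= n./2)%N & graph_iso e (compl_graph (complete_bipartite n a)).
Proof.
move=> P3_free I3_free.
have [complete|] := boolP [forall x, forall y, (x != y) ==> e x y].
  left; apply: eq_graph_iso => x y; rewrite /complete_graph.
  have [->|nxy] := eqVneq x y; first by rewrite e_irr.
  by move/forallP/(_ x)/forallP/(_ y): complete; rewrite nxy.
case/forallPn => p /forallPn [q]; rewrite negb_imply => /andP [npq nepq].
right; pose S := [set x | (x == p) || e p x].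
apply: (iso_compl_bipartite (S := S)); last first.
  by move=> x y; rewrite /S !inE; exact: (P3_indep3_free_two_cliques P3_free I3_free npq nepq).
apply/andP; split; first by apply/card_gt0P; exists p; rewrite inE eqxx.
rewrite -[X in (_ < X)%N]card_ord -cardsT; apply: proper_card; rewrite properT.
by apply/eqP => /setP /(_ q); rewrite !inE eq_sym (negbTE npq) (negbTE nepq).
Qed.

Lemma P3_or_indep3 : ~ graph_iso e (complete_graph n) ->
  (forall a, (1 <= a <= n./2)%N -> ~ graph_iso e (compl_graph (complete_bipartite n a))) ->
  induced_P3 || indep3.
Proof.
move=> not_K not_bip; apply/negPn/negP => /norP [P3_free I3_free].
by case: (P3_indep3_free_classification P3_free I3_free) => [//|[a /not_bip]].
Qed.

End SimpleGraph.

End Graphs.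

Lemma compl_P3_or_indep3 n (e : rel 'I_n) : simple_graph e ->
  ~ graph_iso e (empty_graph n) ->
  (forall a, (1 <= a <= n./2)%N -> ~ graph_iso e (complete_bipartite n a)) ->
  induced_P3 (compl_graph e) || indep3 (compl_graph e).
Proof.
move=> se not_E not_bip; have eK := compl_graphK (proj2 se).
apply: (P3_or_indep3 (compl_graph_simple se)) => [|a /not_bip not_iso]
  /graph_iso_compl /(graph_iso_eql eK) iso.
  apply: not_E; apply: graph_iso_eqr iso => x y.
  by rewrite /compl_graph /complete_graph /empty_graph andbN.
apply: not_iso; apply: graph_iso_eqr iso; apply: compl_graphK => x.
by rewrite /complete_bipartite eqxx.
Qed.

Lemma exists_compl_edge n (e : rel 'I_n) : simple_graph e ->
  ~ graph_iso e (complete_graph n) -> exists x y, compl_graph e x y.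
Proof.
move=> se not_K; apply: exists_edge => /graph_iso_compl.
move=> /(graph_iso_eql (compl_graphK (proj2 se))) iso; apply: not_K.
by apply: graph_iso_eqr iso => x y; rewrite /compl_graph /empty_graph /complete_graph andbT.
Qed.

Local Open Scope ring_scope.

Section BilinearForm.
Variables (R : comNzRingType) (n : nat).
Implicit Types (M N : 'M[R]_n) (u v w : 'rV[R]_n).

Definition bform M u v : R := (u *m M *m v^T) 0 0.

Lemma bformDl M u v w : bform M (u + v) w = bform M u w + bform M v w.
Proof. by rewrite /bform !mulmxDl mxE. Qed.

Lemma bformDr M u v w : bform M u (v + w) = bform M u v + bform M u w.
Proof. by rewrite /bform linearD /= mulmxDr mxE. Qed.

Lemma bformZl M a u v : bform M (a *: u) v = a * bform M u v.
Proof. by rewrite /bform -!scalemxAl mxE. Qed.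

Lemma bformZr M a u v : bform M u (a *: v) = a * bform M u v.
Proof. by rewrite /bform linearZ /= -!scalemxAr mxE. Qed.

Lemma bformNl M u v : bform M (- u) v = - bform M u v.
Proof. by rewrite -scaleN1r bformZl mulN1r. Qed.

Lemma bformNr M u v : bform M u (- v) = - bform M u v.
Proof. by rewrite -scaleN1r bformZr mulN1r. Qed.

Lemma bformMD M N u v : bform (M + N) u v = bform M u v + bform N u v.
Proof. by rewrite /bform mulmxDr mulmxDl mxE. Qed.

Lemma bformC M u v : M^T = M -> bform M u v = bform M v u.
Proof.
move=> sM; rewrite /bform.
have -> : (u *m M *m v^T) 0 0 = (u *m M *m v^T)^T 0 0 by rewrite [RHS]mxE.
by rewrite !trmx_mul trmxK sM mulmxA.
Qed.

Lemma bform_kerl M u v : u *m M = 0 -> bform M u v = 0.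
Proof. by move=> uM0; rewrite /bform uM0 mul0mx mxE. Qed.

Lemma bform_delta M i j : bform M (delta_mx 0 i) (delta_mx 0 j) = M i j.
Proof. by rewrite /bform trmx_delta -rowE -colE !mxE. Qed.

End BilinearForm.

Section Orthogonality.
Variables (F : fieldType) (m n : nat) (A : 'M[F]_(m, n)) (M : 'M[F]_n).

Lemma bform_orthP (z : 'rV[F]_n) :
  (z *m M <= kermx A^T)%MS <-> forall k, (k <= A)%MS -> bform M z k = 0.
Proof.
split=> [/sub_kermxP zMA k /submxP [x ->] | orth].
  by rewrite /bform trmx_mul mulmxA zMA mul0mx mxE.
apply/sub_kermxP/matrixP => i j; rewrite (ord1 i) [RHS]mxE.
rewrite -(orth (row j A) (row_sub j A)) !mxE.
by rewrite /bform mxE; apply: eq_bigr => l _; rewrite !mxE.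
Qed.

End Orthogonality.

Section Hyperplane.
Variables (F : fieldType) (m n : nat) (U : 'M[F]_(m, n)).

Lemma row_full_adds_hyperplane (z : 'rV[F]_n) :
  (\rank U).+1 = n -> ~~ (z <= U)%MS -> row_full (U + z)%MS.
Proof.
move=> rkU zU; have := rank_leq_row (U + z)%MS.
have /ltn_leqif : (\rank U <= \rank (U + z)%MS ?= iff (U + z <= U)%MS)%N.
  exact: mxrank_leqif_sup (addsmxSl U z).
rewrite (contraNN (submx_trans (addsmxSr U z)) zU) rkU /row_full => lt_rk le_rk.
by apply/eqP; lia.
Qed.

End Hyperplane.

Section SplitForm.
Variables (R : comNzRingType) (n : nat) (P Q : 'M[R]_n) (z : 'rV[R]_n) (mu : R).
Hypotheses (sP : P^T = P) (sQ : Q^T = Q) (zP : z *m P = mu *: (z *m (P + Q))).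

Lemma bform_split a b al : a *m P = 0 -> b *m Q = 0 -> bform (P + Q) z b = 0 ->
  bform P (a + b + al *: z) (a + b + al *: z) =
  bform (P + Q) b b + al ^+ 2 * (mu * bform (P + Q) z z).
Proof.
move=> aP bQ zb.
have Pa v : bform P v a = 0 by rewrite bformC ?bform_kerl.
have Pb : bform P b b = bform (P + Q) b b by rewrite bformMD (bform_kerl _ bQ) addr0.
have Pzb : bform P z b = 0 by rewrite /bform zP -scalemxAl mxE -/(bform _ z b) zb mulr0.
have Pbz : bform P b z = 0 by rewrite bformC.
have Pzz : bform P z z = mu * bform (P + Q) z z by rewrite /bform zP -scalemxAl mxE.
rewrite !bformDl !bformDr !bformZl !bformZr !(bform_kerl _ aP) !Pa Pb Pzb Pbz Pzz.
ring.
Qed.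

End SplitForm.

Lemma sqr_mul_lt0 (R : realDomainType) (x y : R) : x ^+ 2 * y < 0 -> y < 0.
Proof.
by move=> lt0; rewrite ltNge; apply: contraTN lt0 => y_ge0; rewrite -leNgt mulr_ge0 ?sqr_ge0.
Qed.

Lemma negdef_binary_form (R : realFieldType) (p m r x y : R) :
  p < 0 -> m ^+ 2 < p * r -> 0 <= p * x ^+ 2 + 2 * m * x * y + r * y ^+ 2 ->
  x = 0 /\ y = 0.
Proof.
move=> p_lt0 det_gt0 Q_ge0.
have y0 : y = 0.
  have : (p * x + m * y) ^+ 2 + (p * r - m ^+ 2) * y ^+ 2 <= 0.
    have -> : (p * x + m * y) ^+ 2 + (p * r - m ^+ 2) * y ^+ 2 =
              p * (p * x ^+ 2 + 2 * m * x * y + r * y ^+ 2) by ring.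
    by rewrite nmulr_rle0.
  have := sqr_ge0 (p * x + m * y); have := sqr_ge0 y => *.
  by apply/eqP; rewrite -sqrf_eq0 eq_le sqr_ge0 andbT; nra.
move: Q_ge0; rewrite y0 expr0n /= !(mulr0, addr0) => Q_ge0.
by split=> //; apply/eqP; rewrite -sqrf_eq0 eq_le sqr_ge0 andbT; nra.
Qed.

Section Pencil.
Variables (R : realFieldType) (n : nat) (X Y : 'M[R]_n).
Hypotheses (sX : X^T = X) (sY : Y^T = Y).
Hypothesis W_posdef : forall u : 'rV[R]_n, u != 0 -> 0 < bform (X + Y) u u.
Local Notation W := (X + Y).
Local Notation U := (kermx X + kermx Y)%MS.
Implicit Types a b k s t u v w : 'rV[R]_n.

Lemma bformW_ge0 u : 0 <= bform W u u.
Proof. by have [->|/W_posdef/ltW//] := eqVneq u 0; rewrite /bform !mul0mx mxE. Qed.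

Lemma bformW_eq0 u : bform W u u = 0 -> u = 0.
Proof. by apply: contra_eq => /W_posdef /lt0r_neq0. Qed.

Lemma mulW_inj u v : u *m W = v *m W -> u = v.
Proof.
move=> eq_uvW; apply/eqP; rewrite -subr_eq0; apply/eqP/bformW_eq0/bform_kerl.
by rewrite mulmxBl eq_uvW subrr.
Qed.

Lemma sub_kers k : (k <= U)%MS ->
  exists a b, [/\ a *m X = 0, b *m Y = 0 & k = a + b].
Proof.
case/sub_addsmxP => [[u1 u2]] /= ->; exists (u1 *m kermx X), (u2 *m kermx Y).
by split=> //; apply/sub_kermxP; exact: submxMl.
Qed.

Lemma mxrank_kers : \rank U = (n - \rank X + (n - \rank Y))%N.
Proof.
rewrite mxrank_disjoint_sum ?mxrank_ker //.
apply/eqP; rewrite -submx0; apply/rV_subP => u; rewrite sub_capmx.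
case/andP => /sub_kermxP uX /sub_kermxP uY.
by rewrite (bformW_eq0 (u := u)) ?sub0mx // bformMD !bform_kerl // addr0.
Qed.

Lemma kerX_sub_kers a : a *m X = 0 -> (a <= U)%MS.
Proof. by move/sub_kermxP/submx_trans; apply; apply: addsmxSl. Qed.

Lemma kerY_sub_kers b : b *m Y = 0 -> (b <= U)%MS.
Proof. by move/sub_kermxP/submx_trans; apply; exact: addsmxSr. Qed.

Lemma exists_W_orth_kers : (\rank U).+1 = n ->
  exists z lam, [/\ z != 0, z *m X = lam *: (z *m W) &
                     forall k, (k <= U)%MS -> bform W z k = 0].
Proof.
move=> rkU; have rk_perp : \rank (kermx U^T) = 1%N.
  by rewrite mxrank_ker mxrank_tr; move: rkU; lia.
have [z z_neq0 zW_orth] : exists2 z : 'rV_n, z != 0 & (z *m W <= kermx U^T)%MS.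
  exists (nz_row (kermx (W *m U^T))).
    rewrite nz_row_eq0 -mxrank_eq0 mxrank_ker -lt0n subn_gt0.
    by apply: leq_ltn_trans (mxrankM_maxr W U^T) _; rewrite mxrank_tr; move: rkU; lia.
  by apply/sub_kermxP; rewrite -mulmxA; apply/sub_kermxP/nz_row_sub.
have z_orth := iffLR (bform_orthP _ _ _) zW_orth.
have zX_orth : (z *m X <= kermx U^T)%MS.
  apply/bform_orthP => _ /sub_kers [a [b [aX bY ->]]].
  rewrite bformDr [bform X z a]bformC // (bform_kerl _ aX) add0r.
  have /z_orth : (b <= U)%MS by apply: kerY_sub_kers.
  by rewrite bformMD [bform Y z b]bformC // (bform_kerl _ bY) addr0.
have zW_neq0 : z *m W != 0.
  by apply: contraNneq z_neq0 => zW0; apply/eqP/mulW_inj; rewrite zW0 mul0mx.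
have perp_zW : (kermx U^T <= z *m W)%MS.
  by have := mxrank_leqif_sup zW_orth; rewrite rank_rV zW_neq0 rk_perp => /leqif_refl.
have [lam zX] := sub_rVP (submx_trans zX_orth perp_zW).
by exists z, lam.
Qed.

Lemma exceptional_direction : (\rank X + \rank Y <= n.+1)%N ->
  exists z lam, [/\ z *m X = lam *: (z *m W),
    forall k, (k <= U)%MS -> bform W z k = 0 &
    forall v, exists a b al, [/\ a *m X = 0, b *m Y = 0 & v = a + b + al *: z]].
Proof.
move=> rk_sum; have [fullU|notfullU] := eqVneq (\rank U) n.
  exists 0, 0; split=> [|k _|v]; first by rewrite mul0mx scale0r.
    by rewrite /bform !mul0mx mxE.
  have [a [b [aX bY ->]]] := sub_kers (submx_full v (introT eqP fullU)).
  by exists a, b, 0; rewrite scale0r addr0.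
have rkU : (\rank U).+1 = n.
  by move: rk_sum notfullU (rank_leq_row U); rewrite mxrank_kers; lia.
have [z [lam [z_neq0 zX z_orth]]] := exists_W_orth_kers rkU.
exists z, lam; split=> // v.
have zU : ~~ (z <= U)%MS.
  by apply: contra z_neq0 => /z_orth zz; apply/eqP/bformW_eq0.
case/sub_addsmxP: (submx_full v (row_full_adds_hyperplane rkU zU)) => [[y1 y2]] /= ->.
have [a [b [aX bY ->]]] := sub_kers (submxMl y1 U).
have [al ->] := sub_rVP (submxMl y2 z).
by exists a, b, al.
Qed.

Section ExceptionalForms.
Variables (z : 'rV[R]_n) (lam : R).
Hypotheses (zX : z *m X = lam *: (z *m W))
           (z_orth : forall k, (k <= U)%MS -> bform W z k = 0).

Lemma bformX_exceptional a b al : a *m X = 0 -> b *m Y = 0 ->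
  bform X (a + b + al *: z) (a + b + al *: z) =
  bform W b b + al ^+ 2 * (lam * bform W z z).
Proof. by move=> aX bY; apply: bform_split => //; apply/z_orth/kerY_sub_kers. Qed.

Lemma bformY_exceptional a b al : a *m X = 0 -> b *m Y = 0 ->
  bform Y (a + b + al *: z) (a + b + al *: z) =
  bform W a a + al ^+ 2 * ((1 - lam) * bform W z z).
Proof.
move=> aX bY; have zY : z *m Y = (1 - lam) *: (z *m W).
  by rewrite scalerBl scale1r -zX mulmxDr addrAC subrr add0r.
rewrite [a + b]addrC [X + Y]addrC in zY *.
by apply: bform_split; rewrite // addrC; apply/z_orth/kerX_sub_kers.
Qed.

Lemma mulX_exceptional a b al : a *m X = 0 -> b *m Y = 0 ->
  (a + b + al *: z) *m X = (b + (al * lam) *: z) *m W.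
Proof.
move=> aX bY; rewrite !mulmxDl aX add0r -!scalemxAl zX scalerA.
by rewrite [b *m W]mulmxDr bY addr0.
Qed.

Lemma bformW_exceptional b al : b *m Y = 0 ->
  bform W (b + al *: z) (b + al *: z) = bform W b b + al ^+ 2 * bform W z z.
Proof.
move=> bY; have sW : W^T = W by rewrite linearD /= sX sY.
have zb : bform W z b = 0 by apply/z_orth/kerY_sub_kers.
rewrite !bformDl !bformDr !bformZl !bformZr [bform W b z]bformC // zb.
by rewrite expr2; ring.
Qed.

End ExceptionalForms.

Lemma rank_sum_ge_neg_neg s t : bform X s s < 0 -> bform Y t t < 0 ->
  (n.+2 <= \rank X + \rank Y)%N.
Proof.
move=> Xs Yt; rewrite leqNgt ltnS; apply/negP.
case/exceptional_direction => z [lam [zX z_orth dec]].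
have [a [b [al [aX bY def_s]]]] := dec s.
have [a' [b' [al' [aX' bY' def_t]]]] := dec t.
rewrite def_s (bformX_exceptional zX z_orth _ aX bY) in Xs.
rewrite def_t (bformY_exceptional zX z_orth _ aX' bY') in Yt.
have /sqr_mul_lt0 : al ^+ 2 * (lam * bform W z z) < 0 by have := bformW_ge0 b; lra.
have /sqr_mul_lt0 : al' ^+ 2 * ((1 - lam) * bform W z z) < 0.
  by have := bformW_ge0 a'; lra.
by rewrite mulrBl mul1r; have := bformW_ge0 z; lra.
Qed.

(* [t] witnesses a generalized eigenvalue of the pencil above 1, and [u] one in (0, 1). *)
Lemma rank_sum_ge_neg_contract t u beta : bform Y t t < 0 ->
  beta *m W = u *m X -> bform W beta beta < bform X u u ->
  (n.+2 <= \rank X + \rank Y)%N.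
Proof.
move=> Yt betaW Xu; rewrite leqNgt ltnS; apply/negP.
case/exceptional_direction => z [lam [zX z_orth dec]].
have [a' [b' [al' [aX' bY' def_t]]]] := dec t.
rewrite def_t (bformY_exceptional zX z_orth _ aX' bY') in Yt.
have /sqr_mul_lt0 : al' ^+ 2 * ((1 - lam) * bform W z z) < 0.
  by have := bformW_ge0 a'; lra.
have c_ge0 := bformW_ge0 z; set c := bform W z z in c_ge0 *.
rewrite mulrBl mul1r => Yz; have lam_gt1 : 1 < lam by nra.
have [a [b [al [aX bY def_u]]]] := dec u.
have def_beta : beta = b + (al * lam) *: z.
  by apply: mulW_inj; rewrite betaW def_u (mulX_exceptional zX).
move: Xu; rewrite def_beta def_u (bformW_exceptional z_orth _ bY).
rewrite (bformX_exceptional zX z_orth _ aX bY) -/c ltrD2l.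
have q_ge0 : 0 <= al ^+ 2 * c by rewrite mulr_ge0 ?sqr_ge0.
have -> : (al * lam) ^+ 2 * c = al ^+ 2 * c * lam ^+ 2 by ring.
have -> : al ^+ 2 * (lam * c) = al ^+ 2 * c * lam by ring.
have : 0 <= al ^+ 2 * c * (lam - 1) by rewrite mulr_ge0 // subr_ge0 ltW.
by nra.
Qed.

Lemma rank_sum_ge_negdef_plane v w : bform Y v v < 0 ->
  bform Y v w ^+ 2 < bform Y v v * bform Y w w ->
  (n.+2 <= \rank X + \rank Y)%N.
Proof.
move=> Yv det_gt0; rewrite leqNgt ltnS; apply/negP.
case/exceptional_direction => z [lam [zX z_orth dec]].
have [a1 [b1 [al1 [aX1 bY1 def_v]]]] := dec v.
have [a2 [b2 [al2 [aX2 bY2 def_w]]]] := dec w.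
have aX : (al2 *: a1 - al1 *: a2) *m X = 0.
  by rewrite mulmxBl -!scalemxAl aX1 aX2 !scaler0 subrr.
have bY : (al2 *: b1 - al1 *: b2) *m Y = 0.
  by rewrite mulmxBl -!scalemxAl bY1 bY2 !scaler0 subrr.
have def_u : al2 *: v - al1 *: w =
    (al2 *: a1 - al1 *: a2) + (al2 *: b1 - al1 *: b2) + 0 *: z.
  by rewrite def_v def_w; apply/matrixP => i j; rewrite !mxE; ring.
have Yu : 0 <= bform Y (al2 *: v - al1 *: w) (al2 *: v - al1 *: w).
  by rewrite def_u (bformY_exceptional zX z_orth _ aX bY) expr0n mul0r addr0 bformW_ge0.
have Qu : bform Y (al2 *: v - al1 *: w) (al2 *: v - al1 *: w) =
    bform Y v v * al2 ^+ 2 + 2 * bform Y v w * al2 * (- al1) + bform Y w w * (- al1) ^+ 2.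
  rewrite !bformDl !bformDr !bformNl !bformNr !bformZl !bformZr [bform Y w v]bformC //.
  by ring.
rewrite Qu in Yu.
have [_ /eqP] := negdef_binary_form Yv det_gt0 Yu.
rewrite oppr_eq0 => /eqP al1_0; move: Yv.
rewrite def_v al1_0 (bformY_exceptional zX z_orth _ aX1 bY1) expr0n mul0r addr0.
by rewrite ltNge bformW_ge0.
Qed.

End Pencil.

Lemma mxrank_mxsub (F : fieldType) m n p q (f : 'I_p -> 'I_m) (g : 'I_q -> 'I_n)
    (A : 'M[F]_(m, n)) :
  (\rank (mxsub f g A) <= \rank A)%N.
Proof.
rewrite mxsubrc (leq_trans (mxrankS (rowsub_sub _ _))) //.
rewrite -mxrank_tr -[colsub g A]/(mxsub id g A) trmx_mxsub.
by rewrite (leq_trans (mxrankS (rowsub_sub _ _))) ?mxrank_tr.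
Qed.

Lemma mxrank_ge_unit_mxsub (F : fieldType) n k (f : 'I_k -> 'I_n) (A : 'M[F]_n) :
  mxsub f f A \in unitmx -> (k <= \rank A)%N.
Proof. by move/mxrank_unit <-; apply: mxrank_mxsub. Qed.

Section AllOnesPlusIdentity.
Variables (R : realFieldType) (n : nat).
Local Notation JI := (const_mx 1 + 1%:M : 'M[R]_n).

Lemma mulmx_JI (u : 'rV[R]_n) : u *m JI = (\sum_i u 0 i) *: const_mx 1 + u.
Proof.
apply/matrixP => i j; rewrite mulmxDr mulmx1 !mxE; congr (_ + _).
by rewrite (ord1 i) mulr1; apply: eq_bigr => k _; rewrite mxE mulr1.
Qed.

Lemma bform_JI (u : 'rV[R]_n) :
  bform JI u u = (\sum_i u 0 i) ^+ 2 + \sum_i u 0 i ^+ 2.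
Proof.
rewrite /bform mulmx_JI mulmxDl mxE -scalemxAl mxE expr2; congr (_ * _ + _).
  by rewrite mxE; apply: eq_bigr => i _; rewrite !mxE mul1r.
by rewrite mxE; apply: eq_bigr => i _; rewrite mxE expr2.
Qed.

Lemma JI_posdef (u : 'rV[R]_n) : u != 0 -> 0 < bform JI u u.
Proof.
move=> u_neq0; have /existsP [i ui] : [exists i, u 0 i != 0].
  apply: contraR u_neq0 => /existsPn u0; apply/eqP/matrixP => i j.
  by rewrite (ord1 i) mxE; apply/eqP/negbNE/u0.
rewrite bform_JI ltr_wpDl ?sqr_ge0 // (bigD1 i) //= ltr_wpDr ?sumr_ge0 //.
  by move=> j _; apply: sqr_ge0.
by rewrite lt_def sqrf_eq0 ui sqr_ge0.
Qed.

Lemma JI_delta_preimage (q : 'I_n) :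
  exists2 beta : 'rV[R]_n, beta *m JI = delta_mx 0 q & bform JI beta beta < 1.
Proof.
(* beta = e_q (J + I)^-1 = e_q - 1 / (n + 1), whose q-th coordinate is n / (n + 1). *)
pose c : R := n.+1%:R^-1; have c_gt0 : 0 < c by rewrite invr_gt0 ltr0Sn.
pose beta : 'rV[R]_n := delta_mx 0 q - c *: const_mx 1.
have sum_beta : \sum_i beta 0 i = c.
  under eq_bigr => i _ do rewrite !mxE mulr1.
  rewrite sumrB sumr_const card_ord (bigD1 q) //= eqxx big1 => [|i /negbTE -> //].
  by rewrite addr0 /c -[X in 1 - X]mulr_natl -natr1; field; rewrite natr1 pnatr_eq0.
have beta_JI : beta *m JI = delta_mx 0 q.
  by rewrite mulmx_JI sum_beta /beta addrCA -scalerBr subrr scaler0 addr0.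
by exists beta; rewrite // /bform beta_JI -rowE !mxE !eqxx mulr1 gtrBl.
Qed.

End AllOnesPlusIdentity.

Definition closed_nbhd_mx (R : nzRingType) n (e : rel 'I_n) : 'M[R]_n :=
  adj_mx R e + 1%:M.

Section GraphRules.
Variables (n : nat) (e : rel 'I_n).
Hypothesis se : simple_graph e.

Lemma edgeE x y : e x y ->
  (e x y = true) * (e y x = true) * (x == y = false) * (y == x = false).
Proof.
case: se => e_sym e_irr exy; have nxy : x != y by apply: contraTneq exy => ->; rewrite e_irr.
by rewrite [e y x]e_sym [y == x]eq_sym exy (negbTE nxy).
Qed.

Lemma nonedgeE x y : ~~ e x y -> (e x y = false) * (e y x = false).
Proof. by case: se => e_sym _ /negbTE nexy; rewrite [e y x]e_sym nexy. Qed.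

End GraphRules.

Lemma neqE (T : eqType) (x y : T) : x != y -> (x == y = false) * (y == x = false).
Proof. by move/negbTE=> nxy; rewrite [y == x]eq_sym nxy. Qed.

Lemma closed_nbhd_mxE (R : nzRingType) n (e : rel 'I_n) : irreflexive e ->
  forall i j, closed_nbhd_mx R e i j = ((i == j) || e i j)%:R.
Proof.
move=> e_irr i j; rewrite !mxE.
by have [->|] := eqVneq i j; rewrite ?e_irr ?add0r ?addr0.
Qed.

Section ClosedNbhdMatrix.
Variables (R : realFieldType) (n : nat) (e : rel 'I_n).
Hypothesis se : simple_graph e.
Local Notation X := (closed_nbhd_mx R e).
Local Notation Y := (closed_nbhd_mx R (compl_graph e)).
Let XE := closed_nbhd_mxE R (proj2 se).

Lemma closed_nbhd_mx_complE i j : Y i j = ((i == j) || ~~ e i j)%:R.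
Proof.
rewrite (closed_nbhd_mxE _ (proj2 (compl_graph_simple se))) /compl_graph.
by case: eqVneq.
Qed.

Lemma closed_nbhd_mx_sym : X^T = X.
Proof. by apply/matrixP => i j; rewrite mxE !XE eq_sym (proj1 se). Qed.

Lemma closed_nbhd_mx_add_compl : X + Y = const_mx 1 + 1%:M.
Proof.
apply/matrixP => i j; rewrite [LHS]mxE XE closed_nbhd_mx_complE !mxE.
by case: eqVneq; case: (e i j); rewrite /= ?addr0 ?add0r.
Qed.

Lemma closed_nbhd_mx_posdef u : u != 0 -> 0 < bform (X + Y) u u.
Proof. by rewrite closed_nbhd_mx_add_compl; apply: JI_posdef. Qed.

Lemma closed_nbhd_mx_rank_ge3 : induced_P3 e || indep3 e -> (3 <= \rank X)%N.
Proof.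
case/orP => /existsP [u /existsP [v /existsP [w uvw]]];
  apply: (@mxrank_ge_unit_mxsub _ _ _ (fun i : 'I_3 => nth u [:: u; v; w] i)).
  case/and4P: uvw => euv evw neuw nuw.
  (* The inverse of the principal submatrix [[1, 1, 0], [1, 1, 1], [0, 1, 1]] on u, v, w. *)
  pose B : 'M[R]_3 := \matrix_(i, j)
    nth 0 (nth [::] [:: [:: 0; 1; -1]; [:: 1; -1; 1]; [:: -1; 1; 0]] i) j.
  apply: (proj1 (@mulmx1_unit _ _ _ B _)); apply/matrixP => i j.
  rewrite !mxE !big_ord_recr big_ord0 /= !mxE.
  case: i => [[|[|[|//]]]] ?; case: j => [[|[|[|//]]]] ? /=;
  rewrite !(edgeE se euv, edgeE se evw, nonedgeE se neuw, neqE nuw, eqxx, proj2 se) /=; ring.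
case/and4P: uvw => nuv nvw nuw /and3P [neuv nevw neuw].
apply: (proj1 (@mulmx1_unit _ _ _ 1%:M _)); rewrite mulmx1; apply/matrixP => i j.
rewrite !mxE; case: i => [[|[|[|//]]]] ?; case: j => [[|[|[|//]]]] ? /=;
rewrite !(nonedgeE se neuv, nonedgeE se nevw, nonedgeE se neuw, neqE nuv, neqE nvw,
          neqE nuw, eqxx, proj2 se) /=; ring.
Qed.

Lemma closed_nbhd_mx_neg_of_P3 : induced_P3 e -> exists s, bform X s s < 0.
Proof.
case/existsP => u /existsP [v /existsP [w /and4P [euv evw neuw nuw]]].
exists (delta_mx 0 u - delta_mx 0 v + delta_mx 0 w).
rewrite !bformDl !bformDr !bformNl !bformNr !bform_delta !XE.
rewrite !(edgeE se euv, edgeE se evw, nonedgeE se neuw, neqE nuw, eqxx) /=.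
lra.
Qed.

Lemma closed_nbhd_mx_isolated q : (forall j, ~~ e q j) ->
  (delta_mx 0 q : 'rV[R]_n) *m X = delta_mx 0 q.
Proof.
move=> q_isol; rewrite -rowE; apply/matrixP => i j.
by rewrite !mxE (negbTE (q_isol j)) add0r (ord1 i) eq_sym.
Qed.

Lemma compl_negdef_plane p p' q q' r : e p p' -> e q q' ->
  ~~ e p q -> ~~ e p q' -> ~~ e p' q -> ~~ e p' q' ->
  ~~ e p r -> ~~ e p' r -> ~~ e q r -> ~~ e q' r ->
  exists v w, bform Y v v < 0 /\ bform Y v w ^+ 2 < bform Y v v * bform Y w w.
Proof.
move=> epp' eqq' npq npq' np'q np'q' npr np'r nqr nq'r.
(* The Gram matrix of Y on these two vectors is [[-4, -2], [-2, -2]]. *)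
exists (delta_mx 0 p + delta_mx 0 p' - delta_mx 0 q - delta_mx 0 q'),
       (delta_mx 0 p + delta_mx 0 p' - delta_mx 0 r - delta_mx 0 r).
rewrite !bformDl !bformDr !bformNl !bformNr !bform_delta !closed_nbhd_mx_complE.
rewrite !(edgeE se epp', edgeE se eqq', nonedgeE se npq, nonedgeE se npq', nonedgeE se np'q,
          nonedgeE se np'q', nonedgeE se npr, nonedgeE se np'r, nonedgeE se nqr,
          nonedgeE se nq'r, eqxx) /= !orbT /=.
by split; nra.
Qed.

End ClosedNbhdMatrix.

Lemma closed_nbhd_mx_eq (R : nzRingType) n (e e' : rel 'I_n) :
  e =2 e' -> closed_nbhd_mx R e = closed_nbhd_mx R e'.
Proof. by move=> ee'; apply/matrixP => i j; rewrite !mxE ee'. Qed.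

Section RankSum.
Variables (R : realFieldType) (n : nat) (e : rel 'I_n).
Hypothesis se : simple_graph e.
Local Notation X := (closed_nbhd_mx R e).
Local Notation Y := (closed_nbhd_mx R (compl_graph e)).
Let sc := compl_graph_simple se.
Let sX := closed_nbhd_mx_sym R se.
Let sY := closed_nbhd_mx_sym R sc.
Let W_posdef := closed_nbhd_mx_posdef (R := R) se.

Lemma rank_sum_ge_P3_P3 : induced_P3 e -> induced_P3 (compl_graph e) ->
  (n.+2 <= \rank X + \rank Y)%N.
Proof.
move=> /(closed_nbhd_mx_neg_of_P3 R se) [s Xs].
move=> /(closed_nbhd_mx_neg_of_P3 R sc) [t Yt].
exact: (rank_sum_ge_neg_neg sX sY W_posdef Xs Yt).
Qed.

Lemma rank_sum_ge_isolated q a b : (forall j, ~~ e q j) -> e a b ->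
  (n.+2 <= \rank X + \rank Y)%N.
Proof.
move=> q_isol eab; have [t Yt] : exists t, bform Y t t < 0.
  apply: (closed_nbhd_mx_neg_of_P3 R sc); apply/existsP; exists a.
  apply/existsP; exists q; apply/existsP; exists b.
  have naq : a != q by apply: contraTneq eab => ->; rewrite (negbTE (q_isol b)).
  have nbq : b != q by apply: contraTneq eab => ->; rewrite (proj1 se) (negbTE (q_isol a)).
  by rewrite /compl_graph !(edgeE se eab) !(nonedgeE se (q_isol _)) naq eq_sym nbq.
have [beta betaW beta_lt1] := JI_delta_preimage R q.
apply: (rank_sum_ge_neg_contract sX sY W_posdef Yt (u := delta_mx 0 q) (beta := beta)).
  by rewrite (closed_nbhd_mx_add_compl R se) (closed_nbhd_mx_isolated R q_isol).
by rewrite (closed_nbhd_mx_add_compl R se) bform_delta (closed_nbhd_mxE _ (proj2 se)) eqxx.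
Qed.

Lemma rank_sum_ge_cluster : ~~ induced_P3 e -> indep3 e -> (exists x y, e x y) ->
  (n.+2 <= \rank X + \rank Y)%N.
Proof.
move=> P3_free I3 [a [b eab]].
have [/existsP [q /forallP q_isol]|] := boolP [exists q, [forall j, ~~ e q j]].
  exact: rank_sum_ge_isolated q_isol eab.
move=> /existsPn no_isol; have nbr x : exists y, e x y.
  by move/forallPn: (no_isol x) => [y /negPn exy]; exists y.
have nonedge := induced_P3_free_nonedge P3_free.
case/existsP: I3 => p /existsP [q /existsP [r /and4P [npq nqr npr /and3P [nepq neqr nepr]]]].
have [p' epp'] := nbr p; have [q' eqq'] := nbr q.
have nepq' : ~~ e p q'.
  rewrite (proj1 se); apply: nonedge eqq' _ _; last by rewrite eq_sym.
  by rewrite (proj1 se).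
have npq' : p != q' by apply: contraNneq nepq => ->; rewrite (proj1 se).
have [v [w [Yv det_vw]]] := compl_negdef_plane R se epp' eqq' nepq nepq'
  (nonedge _ _ _ epp' nepq npq) (nonedge _ _ _ epp' nepq' npq') nepr
  (nonedge _ _ _ epp' nepr npr) neqr (nonedge _ _ _ eqq' neqr nqr).
exact: (rank_sum_ge_negdef_plane sX sY W_posdef Yv det_vw).
Qed.

End RankSum.

Lemma rank_sum_closed_nbhd_ge (R : realFieldType) n (e : rel 'I_n) : simple_graph e ->
  induced_P3 e || indep3 e -> induced_P3 (compl_graph e) || indep3 (compl_graph e) ->
  (exists x y, e x y) -> (exists x y, compl_graph e x y) ->
  (n.+2 <= \rank (closed_nbhd_mx R e) + \rank (closed_nbhd_mx R (compl_graph e)))%N.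
Proof.
move=> se G_P3_I3 Gc_P3_I3 e_edge ec_edge.
have [P3|P3_free] := boolP (induced_P3 e); last first.
  by apply: rank_sum_ge_cluster => //; rewrite -[indep3 e]orFb -(negbTE P3_free).
have [P3c|P3c_free] := boolP (induced_P3 (compl_graph e)); first exact: rank_sum_ge_P3_P3.
rewrite addnC -(closed_nbhd_mx_eq R (compl_graphK (proj2 se))).
apply: rank_sum_ge_cluster (compl_graph_simple se) _ _ _ => //.
  by rewrite -[indep3 _]orFb -(negbTE P3c_free).
Qed.

Lemma leq_3pred_mul n r s : (3 <= r)%N -> (3 <= s)%N -> (n.+2 <= r + s)%N ->
  (3 * n.-1 <= r * s)%N.
Proof. by move=> r_ge3 s_ge3 rs_ge; nia. Qed.

Theorem theorem4p3 (R : realFieldType) (n : nat) (e : rel 'I_n) :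
  simple_graph e ->
  ~ graph_iso e (complete_graph n) ->
  ~ graph_iso e (empty_graph n) ->
  (forall a : nat, (1 <= a <= n./2)%N ->
     ~ graph_iso e (complete_bipartite n a) /\
     ~ graph_iso e (compl_graph (complete_bipartite n a))) ->
  (3 * n.-1 <= \rank ((adj_mx R e + 1%:M)%R) * \rank ((adj_mx R (compl_graph e) + 1%:M)%R))%N.
Proof.
move=> se not_K not_E not_bip; have sc := compl_graph_simple se.
have G_P3_I3 := P3_or_indep3 se not_K (fun a a_range => (not_bip a a_range).2).
have Gc_P3_I3 := compl_P3_or_indep3 se not_E (fun a a_range => (not_bip a a_range).1).
apply: leq_3pred_mul (closed_nbhd_mx_rank_ge3 R se G_P3_I3)
  (closed_nbhd_mx_rank_ge3 R sc Gc_P3_I3) _.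
exact: rank_sum_closed_nbhd_ge se G_P3_I3 Gc_P3_I3 (exists_edge not_E)
  (exists_compl_edge se not_K).
Qed.
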